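(* Let $\mathcal{A}$ be a unital C*-algebra and let $\mathcal{E}$ be a (left) Hilbert C*-module over $\mathcal{A}$. Let $\{\tau_n\}_{n=1}^\infty$ and $\{\omega_m\}_{m=1}^\infty$ be two modular Parseval frames for $\mathcal{E}$. Then for every $x \in \mathcal{E}$ with $x \neq 0$, \[ \left(\frac{\|\theta_\tau x\|_0+\|\theta_\omega x\|_0}{2}\right)^2\geq \|\theta_\tau x \|_0\, \|\theta_\omega x \|_0 \geq \frac{1}{\sup_{n, m \in \mathbb{N}} \|\langle \tau_n, \omega_m\rangle \|^2}. \]
   Context: A (left) Hilbert C*-module over a unital C*-algebra $\mathcal{A}$ is a left $\mathcal{A}$-module $\mathcal{E}$ with a map $\langle\cdot,\cdot\rangle:\mathcal{E}\times\mathcal{E}\to\mathcal{A}$ such that: $\langle x,x\rangle\ge 0$ for all $x$, and $\langle x,x\rangle=0$ implies $x=0$; $\langle x+y,z\rangle=\langle x,z\rangle+\langle y,z\rangle$; $\langle ax,y\rangle=a\langle x,y\rangle$ for $a\in\mathcal{A}$; $\langle x,y\rangle=\langle y,x\rangle^*$; and $\mathcal{E}$ is complete for the norm $\|x\|=\sqrt{\|\langle x,x\rangle\|}$. A collection $\{\tau_n\}_{n=1}^\infty\subseteq\mathcal{E}$ is a modular Parseval frame for $\mathcal{E}$ if $\langle x,x\rangle=\sum_{n=1}^\infty\langle x,\tau_n\rangle\langle\tau_n,x\rangle$ (convergent in $\mathcal{A}$) for all $x\in\mathcal{E}$. Let $\ell^2(\mathbb{N},\mathcal{A})$ be the set of sequences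 $\{a_n\}_{n=1}^\infty$ in $\mathcal{A}$ such that $\sum_n a_na_n^*$ converges in $\mathcal{A}$. For a modular Parseval frame $\{\tau_n\}$, the analysis operator is $\theta_\tau:\mathcal{E}\to\ell^2(\mathbb{N},\mathcal{A})$, $\theta_\tau x=\{\langle x,\tau_n\rangle\}_{n=1}^\infty$. For a sequence $\{a_n\}$ in $\mathcal{A}$, $\|\{a_n\}\|_0$ denotes the number of indices $n$ with $a_n\neq 0$ (the cardinality of its support, a value in $\{0,1,2,\dots\}\cup\{\infty\}$). In the right-hand side, $\|\langle \tau_n,\omega_m\rangle\|$ is the C*-algebra norm in $\mathcal{A}$. *)

From HB Require Import structures.
From mathcomp Require Import all_boot all_order all_algebra.
From mathcomp Require Import complex finmap.
From mathcomp Require Import all_classical all_reals all_analysis.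
Set Implicit Arguments. Unset Strict Implicit. Unset Printing Implicit Defensive.
Import Order.TTheory GRing.Theory Num.Theory.
Import numFieldTopology.Exports numFieldNormedType.Exports.
Local Open Scope ring_scope.
Local Open Scope complex_scope.
Local Open Scope classical_set_scope.

Section CStar.
Variable R : realType.

Definition cvg_in {T : zmodType} (d : T -> R) (u : nat -> T) (l : T) : Prop :=
  (fun n => d (u n - l)) @ \oo --> (0 : R).

Definition cauchy_in {T : zmodType} (d : T -> R) (u : nat -> T) : Prop :=
  forall e : R, 0 < e -> exists N : nat,
    forall m n : nat, (N <= m)%N -> (N <= n)%N -> d (u m - u n) < e.

Definition complete_in {T : zmodType} (d : T -> R) : Prop :=
  forall u : nat -> T, cauchy_in d u -> exists l : T, cvg_in d u l.

Record is_cstar_algebra (A : algType R[i]) (star : A -> A) (nrm : A -> R) :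
    Prop := {
  star_add : forall a b : A, star (a + b) = star a + star b;
  star_scale : forall (c : R[i]) (a : A), star (c *: a) = c^* *: star a;
  star_mul : forall a b : A, star (a * b) = star b * star a;
  star_invol : forall a : A, star (star a) = a;
  nrm_ge0 : forall a : A, 0 <= nrm a;
  nrm_eq0 : forall a : A, nrm a = 0 -> a = 0;
  nrm_triangle : forall a b : A, nrm (a + b) <= nrm a + nrm b;
  nrm_scale : forall (c : R[i]) (a : A), (nrm (c *: a))%:C = `|c| * (nrm a)%:C;
  nrm_submul : forall a b : A, nrm (a * b) <= nrm a * nrm b;
  nrm_cstar : forall a : A, nrm (star a * a) = nrm a ^+ 2;
  nrm_complete : complete_in nrm
}.

Definition cstar_pos (A : algType R[i]) (star : A -> A) (a : A) : Prop :=
  exists b : A, a = star b * b.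

Record is_hilbert_module (A : algType R[i]) (star : A -> A) (nrm : A -> R)
    (E : lmodType A) (ip : E -> E -> A) : Prop := {
  ip_pos : forall x : E, cstar_pos star (ip x x);
  ip_def : forall x : E, ip x x = 0 -> x = 0;
  ip_addl : forall x y z : E, ip (x + y) z = ip x z + ip y z;
  ip_scalel : forall (a : A) (x y : E), ip (a *: x) y = a * ip x y;
  ip_star : forall x y : E, ip x y = star (ip y x);
  hnorm_complete : complete_in (fun x : E => Num.sqrt (nrm (ip x x)))
}.

Definition modular_parseval_frame (A : algType R[i]) (nrm : A -> R)
    (E : lmodType A) (ip : E -> E -> A) (tau : nat -> E) : Prop :=
  forall x : E,
    cvg_in nrm (fun N => \sum_(0 <= n < N) ip x (tau n) * ip (tau n) x) (ip x x).

Definition analysis_op (A : algType R[i]) (E : lmodType A) (ip : E -> E -> A)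
    (tau : nat -> E) (x : E) : nat -> A := fun n => ip x (tau n).

Definition supp_card (T : zmodType) (a : nat -> T) : \bar R :=
  let S := [set n | a n != 0] in
  if `[< finite_set S >] then ((#|` fset_set S |)%:R)%:E else +oo%E.

Definition cross_sup (A : algType R[i]) (nrm : A -> R) (E : lmodType A)
    (ip : E -> E -> A) (tau omega : nat -> E) : \bar R :=
  ereal_sup [set y | exists n m : nat, y = ((nrm (ip (tau n) (omega m))) ^+ 2)%:E].

(* 1 / s on [0, +oo], with conventions 1/0 = +oo and 1/+oo = 0 *)
Definition einv (s : \bar R) : \bar R :=
  match s with
  | EFin r => if r == 0 then +oo%E else (r^-1)%:E
  | +oo%E => 0%E
  | -oo%E => 0%E
  end.

End CStar.

From HB Require Import structures.
From mathcomp Require Import all_boot all_order all_algebra.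
From mathcomp Require Import complex finmap ring.
From mathcomp Require Import all_classical all_reals all_analysis.
Import Order.TTheory GRing.Theory Num.Theory.
Import numFieldTopology.Exports numFieldNormedType.Exports.
Local Open Scope ring_scope.
Local Open Scope classical_set_scope.
Set Implicit Arguments. Unset Strict Implicit. Unset Printing Implicit Defensive.

(* Polarizing the frame identity <z, z> = sum_n <z, tau_n><tau_n, z> at
   z = x + k y, k in {1, -1, i, -i}, yields the reconstruction formula
   <x, y> = sum_n <x, tau_n><tau_n, y>, a finite sum over the support S of
   theta_tau x.  With mu = sup ||<tau_n, omega_m>||, this gives
   ||<x, omega_m>|| <= mu C for C = sum_(n in S) ||<x, tau_n>||, and summing
   over the support T of theta_omega x, D <= |T| mu C; symmetrically
   C <= |S| mu D.  As D > 0 for x <> 0, 1 <= |S| |T| mu^2.  The first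
   inequality is AM-GM. *)

Section CStarAlgebra.
Variables (R : realType) (A : algType R[i]) (star : A -> A) (nrm : A -> R).
Hypothesis HA : is_cstar_algebra star nrm.

Lemma nrmZ_real (k : R[i]) (r : R) (a : A) : `|k| = r%:C%C -> nrm (k *: a) = r * nrm a.
Proof. by move=> kr; apply: (@complexI R); rewrite (nrm_scale HA) kr rmorphM. Qed.

Lemma nrm0 : nrm 0 = 0.
Proof. by rewrite -(scale0r (0 : A)) (@nrmZ_real _ 0) ?mul0r ?normr0. Qed.

Lemma nrmN (a : A) : nrm (- a) = nrm a.
Proof. by rewrite -scaleN1r (@nrmZ_real _ 1) ?mul1r ?normrN ?normr1. Qed.

Lemma nrmMn (a : A) (n : nat) : nrm (a *+ n) = n%:R * nrm a.
Proof. by rewrite -scaler_nat (@nrmZ_real _ n%:R) // normr_nat rmorph_nat. Qed.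

Lemma nrmB (a b : A) : nrm (a - b) <= nrm a + nrm b.
Proof. by rewrite -(nrmN b); apply: (nrm_triangle HA). Qed.

Lemma nrm_sum (I : Type) (s : seq I) (F : I -> A) :
  nrm (\sum_(i <- s) F i) <= \sum_(i <- s) nrm (F i).
Proof.
elim: s => [|i s IHs]; first by rewrite !big_nil nrm0.
by rewrite !big_cons (le_trans (nrm_triangle HA _ _)) // lerD2l.
Qed.

Lemma nrm_gt0 (a : A) : a != 0 -> 0 < nrm a.
Proof.
by move=> a0; rewrite lt0r (nrm_ge0 HA) andbT; apply: contra a0 => /eqP/(nrm_eq0 HA)->.
Qed.

Lemma star1 : star 1 = 1.
Proof.
by rewrite -[star 1]mulr1 -{2}(star_invol HA 1) -(star_mul HA) mulr1 (star_invol HA).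
Qed.

Lemma nrm_star (a : A) : nrm (star a) = nrm a.
Proof.
suff le_nrm_star b : nrm b <= nrm (star b).
  by apply/eqP; rewrite eq_le le_nrm_star -{2}(star_invol HA a) le_nrm_star.
have [->|b_gt0] := eqVneq (nrm b) 0; first exact: (nrm_ge0 HA).
have := nrm_submul HA (star b) b; rewrite (nrm_cstar HA) expr2 ler_pM2r //.
by rewrite lt0r b_gt0 (nrm_ge0 HA).
Qed.

End CStarAlgebra.

Section Polarization.
Variables (R : realType) (A : algType R[i]) (star : A -> A) (nrm : A -> R).
Hypothesis HA : is_cstar_algebra star nrm.
Variables (E : lmodType A) (F : E -> E -> A).
Hypothesis F_addl : forall u1 u2 v, F (u1 + u2) v = F u1 v + F u2 v.
Hypothesis F_addr : forall u v1 v2, F u (v1 + v2) = F u v1 + F u v2.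
Hypothesis F_scalel : forall a u v, F (a *: u) v = a * F u v.
Hypothesis F_scaler : forall a u v, F u (a *: v) = F u v * star a.

Let Fdiag (x y : E) (k : R[i]) := F (x + (k *: 1) *: y) (x + (k *: 1) *: y).

Lemma sesquilinear_diagE x y k : Fdiag x y k =
  F x x + ((k^*)%C *: F x y + k *: F y x) + (k * (k^*)%C) *: F y y.
Proof.
rewrite /Fdiag !(F_addl, F_addr, F_scalel, F_scaler) (star_scale HA) (star1 HA).
by rewrite -!scalerAl -!scalerAr !(mul1r, mulr1) scalerA !addrA.
Qed.

Lemma sesquilinear_diagB x y k :
  Fdiag x y k - Fdiag x y (- k) = ((k^*)%C *: F x y + k *: F y x) *+ 2.
Proof.
rewrite !sesquilinear_diagE rmorphN /= mulrNN !scaleNr -opprD.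
set S := _ + k *: F y x.
by rewrite opprD addrACA subrr addr0 opprB (addrC (F x x)) addrACA subrr addr0 mulr2n.
Qed.

Lemma sesquilinear_polarization x y :
  F x y *+ 4 = (Fdiag x y 1 - Fdiag x y (-1)) + 'i *: (Fdiag x y 'i - Fdiag x y (- 'i)).
Proof.
have conj_i : ('i^*)%C = - 'i :> R[i] by apply/eqP; rewrite eq_complex /= oppr0 !eqxx.
rewrite !sesquilinear_diagB conjc1 conj_i !scale1r -scalerMnr scalerDr !scalerA.
rewrite mulrN -expr2 sqr_i opprK !scaleN1r scale1r -mulrnDl addrACA subrr addr0.
by rewrite -mulr2n -mulrnA.
Qed.

Lemma nrm_sesquilinear_le x y :
  4 * nrm (F x y) <= nrm (Fdiag x y 1) + nrm (Fdiag x y (-1))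
                     + (nrm (Fdiag x y 'i) + nrm (Fdiag x y (- 'i))).
Proof.
rewrite -(nrmMn HA) sesquilinear_polarization.
rewrite (le_trans (nrm_triangle HA _ _)) // lerD ?(nrmB HA) //.
rewrite (@nrmZ_real _ _ _ _ HA _ 1) ?mul1r ?(nrmB HA) //.
by rewrite normc_def /= expr0n expr1n add0r sqrtr1.
Qed.

End Polarization.

Lemma big_nat_supp_seq (V : nmodType) (F : nat -> V) (s : seq nat) N :
  uniq s -> (forall n, F n != 0 -> n \in s) -> (forall n, n \in s -> (n < N)%N) ->
  \sum_(0 <= n < N) F n = \sum_(n <- s) F n.
Proof.
move=> s_uniq supp_s s_ltN; rewrite (bigID (mem s)) /= [X in _ + X]big1 ?addr0.
  rewrite -big_filter; apply: perm_big; apply: uniq_perm => //.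
    exact/filter_uniq/iota_uniq.
  by move=> n; rewrite mem_filter mem_index_iota /=; apply/andb_idr/s_ltN.
by move=> n /negP ns; apply/eqP/negP => /negP /supp_s.
Qed.

Section HilbertModule.
Variables (R : realType) (A : algType R[i]) (star : A -> A) (nrm : A -> R).
Hypothesis HA : is_cstar_algebra star nrm.
Variables (E : lmodType A) (ip : E -> E -> A).
Hypothesis HE : is_hilbert_module star nrm ip.

Lemma ip_addr x y z : ip x (y + z) = ip x y + ip x z.
Proof. by rewrite !(ip_star HE x) (ip_addl HE) (star_add HA). Qed.

Lemma ip_scaler a x y : ip x (a *: y) = ip x y * star a.
Proof. by rewrite !(ip_star HE x) (ip_scalel HE) (star_mul HA). Qed.

Variable tau : nat -> E.

Definition frame_defect (N : nat) (u v : E) : A :=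
  ip u v - \sum_(0 <= n < N) ip u (tau n) * ip (tau n) v.

Lemma frame_defectDl N u1 u2 v :
  frame_defect N (u1 + u2) v = frame_defect N u1 v + frame_defect N u2 v.
Proof.
rewrite /frame_defect (ip_addl HE).
under eq_bigr do rewrite (ip_addl HE) mulrDl.
by rewrite big_split opprD addrACA.
Qed.

Lemma frame_defectDr N u v1 v2 :
  frame_defect N u (v1 + v2) = frame_defect N u v1 + frame_defect N u v2.
Proof.
rewrite /frame_defect ip_addr.
under eq_bigr do rewrite ip_addr mulrDr.
by rewrite big_split opprD addrACA.
Qed.

Lemma frame_defectZl N a u v : frame_defect N (a *: u) v = a * frame_defect N u v.
Proof.
rewrite /frame_defect (ip_scalel HE) mulrBr mulr_sumr.
by under eq_bigr do rewrite (ip_scalel HE) -mulrA.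
Qed.

Lemma frame_defectZr N a u v : frame_defect N u (a *: v) = frame_defect N u v * star a.
Proof.
rewrite /frame_defect ip_scaler mulrBl mulr_suml.
by under eq_bigr do rewrite ip_scaler mulrA.
Qed.

Hypothesis Htau : modular_parseval_frame nrm ip tau.

Lemma frame_defect_cvg0 x y : (fun N => nrm (frame_defect N x y)) @ \oo --> 0.
Proof.
have diag_cvg0 z : (fun N => nrm (frame_defect N z z)) @ \oo --> 0.
  have -> : (fun N => nrm (frame_defect N z z)) =
            (fun N => nrm (\sum_(0 <= n < N) ip z (tau n) * ip (tau n) z - ip z z)).
    by apply: funext => N; rewrite -(nrmN HA) opprB.
  exact: Htau.
pose Fdiag k N := nrm (frame_defect N (x + (k *: 1) *: y) (x + (k *: 1) *: y)).
apply: (@squeeze_cvgr _ _ _ _ (cst 0)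
  (Fdiag 1 + Fdiag (-1) + (Fdiag 'i + Fdiag (- 'i)))).
- near=> N; rewrite (nrm_ge0 HA) /=.
  apply: le_trans (nrm_sesquilinear_le HA (frame_defectDl N) (frame_defectDr N)
      (frame_defectZl N) (frame_defectZr N) x y).
  by rewrite ler_peMl ?(nrm_ge0 HA) ?ler1n.
- exact: cvg_cst.
- have := cvgD (cvgD (diag_cvg0 _) (diag_cvg0 _)) (cvgD (diag_cvg0 _) (diag_cvg0 _)).
  by rewrite !addr0; apply.
Unshelve. all: by end_near.
Qed.

Lemma frame_reconstruction x y (s : seq nat) : uniq s ->
  (forall n, ip x (tau n) != 0 -> n \in s) ->
  ip x y = \sum_(n <- s) ip x (tau n) * ip (tau n) y.
Proof.
move=> s_uniq supp_s; apply/eqP; rewrite -subr_eq0; apply/eqP/(nrm_eq0 HA).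
have defect_eq : \forall N \near \oo,
    nrm (frame_defect N x y) = nrm (ip x y - \sum_(n <- s) ip x (tau n) * ip (tau n) y).
  apply: filterS (nbhs_infty_gt (\max_(n <- s) n)) => N maxN.
  rewrite /frame_defect (big_nat_supp_seq s_uniq) // => [n|n ns].
    by move=> coeff_neq0; apply/supp_s/(contra_neq _ coeff_neq0) => ->; rewrite mul0r.
  exact: leq_ltn_trans (leq_bigmax_seq (F := id) _ ns isT) maxN.
exact: cvg_unique (cvg_near_cst _ defect_eq) (frame_defect_cvg0 x y).
Qed.

Lemma nrm_ip_le_frame_coeff x y (s : seq nat) (M : R) : uniq s ->
  (forall n, ip x (tau n) != 0 -> n \in s) -> (forall n, nrm (ip (tau n) y) <= M) ->
  nrm (ip x y) <= M * \sum_(n <- s) nrm (ip x (tau n)).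
Proof.
move=> s_uniq supp_s le_M; rewrite (frame_reconstruction y s_uniq supp_s) mulr_sumr.
apply: le_trans (nrm_sum HA _ _) (ler_sum _ _) => n _.
by rewrite (le_trans (nrm_submul HA _ _)) // mulrC ler_wpM2r ?(nrm_ge0 HA).
Qed.

Lemma frame_coeff_neq0 x : x != 0 -> exists n, ip x (tau n) != 0.
Proof.
move=> x_neq0; apply: contrapT => no_coeff; case/eqP: x_neq0; apply: (ip_def HE).
rewrite (frame_reconstruction x (s := [::])) ?big_nil // => n xn_neq0.
by case: no_coeff; exists n.
Qed.

End HilbertModule.

Section TwoFrames.
Variables (R : realType) (A : algType R[i]) (star : A -> A) (nrm : A -> R).
Hypothesis HA : is_cstar_algebra star nrm.
Variables (E : lmodType A) (ip : E -> E -> A).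
Hypothesis HE : is_hilbert_module star nrm ip.

Lemma sum_frame_coeff_le (tau omega : nat -> E) x (s t : seq nat) (q : R) :
  modular_parseval_frame nrm ip tau -> uniq s ->
  (forall n, ip x (tau n) != 0 -> n \in s) ->
  (forall n m, nrm (ip (tau n) (omega m)) <= q) ->
  \sum_(m <- t) nrm (ip x (omega m))
    <= (size t)%:R * q * \sum_(n <- s) nrm (ip x (tau n)).
Proof.
move=> Htau s_uniq supp_s le_q; rewrite -mulrA mulr_natl -iter_addr_0 -count_predT.
rewrite -big_const_seq ler_sum // => m _.
by apply: (nrm_ip_le_frame_coeff HA HE Htau) => // n; apply: le_q.
Qed.

Variables tau omega : nat -> E.
Hypotheses (Htau : modular_parseval_frame nrm ip tau)
           (Homega : modular_parseval_frame nrm ip omega).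

Lemma frame_uncertainty x (s t : seq nat) (r : R) : x != 0 -> uniq s -> uniq t ->
  (forall n, ip x (tau n) != 0 -> n \in s) ->
  (forall m, ip x (omega m) != 0 -> m \in t) ->
  (forall n m, nrm (ip (tau n) (omega m)) ^+ 2 <= r) ->
  1 <= (size s)%:R * (size t)%:R * r.
Proof.
move=> x_neq0 s_uniq t_uniq supp_s supp_t le_r.
have r_ge0 : 0 <= r := le_trans (sqr_ge0 _) (le_r 0%N 0%N).
pose q := Num.sqrt r.
have le_q n m : nrm (ip (tau n) (omega m)) <= q.
  by rewrite -(ger0_norm (nrm_ge0 HA _)) -sqrtr_sqr ler_wsqrtr.
have le_q' m n : nrm (ip (omega m) (tau n)) <= q.
  by rewrite (ip_star HE) (nrm_star HA).
pose C := \sum_(n <- s) nrm (ip x (tau n)).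
pose D := \sum_(m <- t) nrm (ip x (omega m)).
have D_le : D <= (size t)%:R * q * C := sum_frame_coeff_le t Htau s_uniq supp_s le_q.
have C_le : C <= (size s)%:R * q * D := sum_frame_coeff_le s Homega t_uniq supp_t le_q'.
have D_gt0 : 0 < D.
  have [m xm_neq0] := frame_coeff_neq0 HA HE Homega x_neq0.
  rewrite /D (bigD1_seq m) ?supp_t //= ltr_pwDl ?(nrm_gt0 HA) //.
  by rewrite sumr_ge0 // => i _; apply: (nrm_ge0 HA).
rewrite -(ler_pM2r D_gt0) mul1r (le_trans D_le) //.
have -> : (size s)%:R * (size t)%:R * r * D = (size t)%:R * q * ((size s)%:R * q * D).
  by rewrite /q -[r in LHS](sqr_sqrtr r_ge0); ring.
by rewrite ler_wpM2l ?mulr_ge0 ?sqrtr_ge0.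
Qed.

End TwoFrames.

Section ExtendedReals.
Variable R : realType.

Lemma supp_card_ge0 (T : zmodType) (u : nat -> T) : (0 <= supp_card R u)%E.
Proof. by rewrite /supp_card; case: asboolP; rewrite ?lee_fin ?leey. Qed.

Lemma supp_card_gt0 (T : zmodType) (u : nat -> T) n : u n != 0 -> (0 < supp_card R u)%E.
Proof.
move=> un_neq0; rewrite /supp_card; case: asboolP => [fin_supp|_]; last exact: ltey.
rewrite lte_fin ltr0n -has_predT; apply/hasP; exists n => //.
by rewrite in_fset_set // inE.
Qed.

Lemma supp_card_EFin (T : zmodType) (u : nat -> T) (p : R) : supp_card R u = p%:E ->
  exists s : seq nat, [/\ uniq s, forall n, u n != 0 -> n \in s & p = (size s)%:R].
Proof.
rewrite /supp_card; case: asboolP => // fin_supp [<-].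
exists (fset_set [set n | u n != 0]); split => //; first exact: fset_uniq.
by move=> n un_neq0; rewrite in_fset_set // inE.
Qed.

Lemma ge0_mule_le_sqr_mean (a b : \bar R) : (0 <= a)%E -> (0 <= b)%E ->
  (a * b <= ((a + b) * (2^-1)%:E) * ((a + b) * (2^-1)%:E))%E.
Proof.
have half_gt0 : (0 < (2^-1 : R)%:E)%E by rewrite lte_fin invr_gt0.
case: a => [p| |] a_ge0; case: b => [q| |] b_ge0 //;
  rewrite ?addey ?addye // ?(gt0_mulye half_gt0) ?mulyy ?leey //.
rewrite -!EFinD -!EFinM lee_fin -subr_ge0.
have -> : (p + q) * 2^-1 * ((p + q) * 2^-1) - p * q = (p - q) ^+ 2 / 4 :> R.
  by field.
by rewrite divr_ge0 ?sqr_ge0.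
Qed.

Lemma einv_le_mule (s a b : \bar R) : (0 < a)%E -> (0 < b)%E ->
  (forall p q r : R, a = p%:E -> b = q%:E -> s = r%:E -> 1 <= p * q * r) ->
  (einv s <= a * b)%E.
Proof.
case: s => [r| |] a_gt0 b_gt0 le_pqr; [|by rewrite mule_ge0 ?ltW..].
case: a a_gt0 le_pqr => [p| |] // a_gt0; case: b b_gt0 => [q| |] // b_gt0 le_pqr;
  rewrite ?(gt0_muley a_gt0) ?(gt0_mulye b_gt0) ?mulyy ?leey //.
have {le_pqr} le_pqr := le_pqr p q r erefl erefl erefl.
have r_gt0 : 0 < r.
  by rewrite -(pmulr_rgt0 _ (mulr_gt0 a_gt0 b_gt0)) (lt_le_trans ltr01).
by rewrite /einv gt_eqF // -EFinM lee_fin -[r^-1]mul1r ler_pdivrMr.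
Qed.

End ExtendedReals.

Unset Implicit Arguments.

Theorem mainTheorem1 (R : realType) (A : algType R[i]) (star : A -> A)
    (nrm : A -> R) (HA : is_cstar_algebra star nrm)
    (E : lmodType A) (ip : E -> E -> A) (HE : is_hilbert_module star nrm ip)
    (tau omega : nat -> E)
    (Htau : modular_parseval_frame nrm ip tau)
    (Homega : modular_parseval_frame nrm ip omega)
    (x : E) (hx : x != 0) :
  let a := supp_card R (analysis_op ip tau x) in
  let b := supp_card R (analysis_op ip omega x) in
  let h := ((a + b) * (2^-1)%:E)%E in
  (a * b <= h * h)%E /\ (einv (cross_sup nrm ip tau omega) <= a * b)%E.
Proof.
move=> a b h; split.
  exact: ge0_mule_le_sqr_mean (supp_card_ge0 _ _) (supp_card_ge0 _ _).
have [n xn_neq0] := frame_coeff_neq0 HA HE Htau hx.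
have [m xm_neq0] := frame_coeff_neq0 HA HE Homega hx.
apply: einv_le_mule (supp_card_gt0 _ xn_neq0) (supp_card_gt0 _ xm_neq0) _ => p q r.
move=> /supp_card_EFin[s [s_uniq supp_s ->]] /supp_card_EFin[t [t_uniq supp_t ->]] sup_r.
apply: (frame_uncertainty HA HE Htau Homega hx) => // n' m'.
by rewrite -lee_fin -sup_r; apply: ereal_sup_ubound; exists n', m'.
Qed.
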